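(* Fix a scenario $v$. Conditioned on $v$, on the taken box $i^*$, and on the stopping time $\tau^*$, the expected objective of Balanced Stopping with Poisson Rounding is at most $\tau^*+c_{i^*}+v_{i^*}=\tau^*+\beta_{i^*}$.
   Context: Correlated Pandora's Problem: boxes $[n]$, box $i$ has opening cost $c_i>0$ and volume $v_i\ge 0$; scenario $v=(v_1,\dots,v_n)$. Write $x_+=\max\{x,0\}$. Let $X_i:[0,\infty)\to[0,1]$, $i\in[n]$, be non-decreasing with $\sum_{i}\big(X_i(t)-X_i((t-c_i)_+)\big)\le 1$ for all $t\ge 0$ (a feasible solution of the General-Cost Convex Program). Poisson Rounding: $\bar x_i(t)=\frac1t\int_0^t\big(X_i(t')-X_i((t'-c_i)_+)\big)\,dt'$; independently for each box $i$, arrivals form a non-homogeneous Poisson process in Poisson time $\tau\ge 0$ with rate $\frac1{c_i}\bar x_i(\tau/2)$; $\alpha_i$ is the first arrival time of box $i$. Balanced Stopping: $\beta_i=c_i+v_i$, $\tau_i=\max\{\alpha_i,\beta_i\}$, $\tau^*=\min_i\tau_i$ (the stopping time), $i^*=\arg\min_i\tau_i$ (the taken box). The algorithm opens in real time, in ascending order of $\alpha_j$, exactly the boxes with $\alpha_j\le\tau^*$ (each costing $c_j$), then stops and takes box $i^*$ (or an opened box of no larger volume); its objective is $\sum_{j:\alpha_j\le\tau^*}c_j$ plus the taken volume. *)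

From HB Require Import structures.
From mathcomp Require Import all_boot all_order all_algebra.
From mathcomp Require Import all_classical all_reals all_analysis.
From mathcomp Require Import measurable_realfun.
Set Implicit Arguments. Unset Strict Implicit. Unset Printing Implicit Defensive.
Import Order.TTheory GRing.Theory Num.Theory.
Local Open Scope classical_set_scope.
Local Open Scope ring_scope.

Section PandoraDefs.
Variable R : realType.

Definition feasible_GCP (n : nat) (c : 'I_n -> R) (X : 'I_n -> R -> R) : Prop :=
  (forall i t, 0 <= t -> 0 <= X i t <= 1) /\
  (forall i s t, 0 <= s -> s <= t -> X i s <= X i t) /\
  (forall t, 0 <= t -> \sum_(i < n) (X i t - X i (Num.max (t - c i) 0)) <= 1).

Definition xbar (X : R -> R) (c t : R) : R :=
  t^-1 * Rintegral (@lebesgue_measure R) `[0, t]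
                  (fun t' => X t' - X (Num.max (t' - c) 0)).

Definition poisson_rate (X : R -> R) (c tau : R) : R := c^-1 * xbar X c (tau / 2).

Definition cum_rate (X : R -> R) (c s : R) : R :=
  Rintegral (@lebesgue_measure R) `[0, s] (poisson_rate X c).

End PandoraDefs.

Section Stopping.
Context {R : realType} {n : nat} {d : measure_display} {T : measurableType d}.
Local Open Scope ereal_scope.

Definition tau_box (c v : 'I_n -> R) (alpha : 'I_n -> T -> \bar R) (i : 'I_n) (w : T)
  : \bar R := Order.max (alpha i w) ((c i + v i)%R)%:E.

Definition tau_star (c v : 'I_n -> R) (alpha : 'I_n -> T -> \bar R) (w : T) : \bar R :=
  \big[Order.min/+oo]_(i < n) tau_box c v alpha i w.

(* i^* = argmin_i tau_i (ties broken towards the smallest index) *)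
Definition taken (c v : 'I_n -> R) (alpha : 'I_n -> T -> \bar R) (i : 'I_n) (w : T)
  : Prop :=
  tau_box c v alpha i w = tau_star c v alpha w /\
  forall j : 'I_n, (j < i)%N -> tau_star c v alpha w < tau_box c v alpha j w.

Definition opening_cost (c v : 'I_n -> R) (alpha : 'I_n -> T -> \bar R) (w : T)
  : \bar R :=
  \sum_(j < n | alpha j w <= tau_star c v alpha w) (c j)%:E.

Definition mutually_independent (P : probability T R) (alpha : 'I_n -> T -> \bar R)
  : Prop :=
  forall B : 'I_n -> set (\bar R), (forall j, measurable (B j : set (\bar R))) ->
    P (\bigcap_(j in [set: 'I_n]) (alpha j @^-1` B j)) =
    \prod_(j < n) P (alpha j @^-1` B j).

End Stopping.

From HB Require Import structures.
From mathcomp Require Import all_boot all_order all_algebra.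
From mathcomp Require Import all_classical all_reals all_analysis.
From mathcomp Require Import measurable_realfun.
From mathcomp Require Import ring lra.
Import Order.TTheory GRing.Theory Num.Theory.
Local Open Scope classical_set_scope.
Local Open Scope ring_scope.

Set Implicit Arguments. Unset Strict Implicit. Unset Printing Implicit Defensive.

(* On the event A that box i is taken with tau* in B we have tau* = tau_i.
   For a box j <> i, whether i beats j depends on alpha_j only through the
   comparison of tau_i with max(alpha_j, beta_j), and alpha_j is independent
   of all other arrival times. Cutting the range of tau_i into cells
   (t_k, t_k + h], the probability that j is opened in cell k of A, i.e. that
   alpha_j <= tau*, is therefore at most
     P(A, cell k) * Lambda_j(t_k) + P(tau_i in cell k) * h / c_j,
   because P(alpha_j <= t) = 1 - exp(-Lambda_j(t)) <= Lambda_j(t) and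
   Lambda_j is (1 / c_j)-Lipschitz. Feasibility of X gives
   sum_j c_j Lambda_j(t) <= t, so the expected opening cost on A is at most
   c_i P(A) + E[tau*; A] + n h; above the last cell the trivial bound
   sum_j c_j <= tau* suffices. Letting h go to 0 proves the claim. *)

(** * Elementary real analysis and integration *)

Section interval_integrals.
Variable R : realType.
Local Notation mu := (@lebesgue_measure R).

Lemma Rintegral_sum d (T : measurableType d) (nu : {measure set T -> \bar R})
    (D : set T) (I : finType) (F : I -> T -> R) :
  measurable D -> (forall k, nu.-integrable D (EFin \o F k)) ->
  \int[nu]_(x in D) (\sum_k F k x) = \sum_k \int[nu]_(x in D) F k x.
Proof.
move=> mD intF; rewrite /Rintegral sum_fine; last first.
  by move=> k _; apply: integrable_fin_num => //; exact: intF.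
congr fine; rewrite -integral_sum//.
by apply: eq_integral => x _; rewrite sumEFin.
Qed.

Lemma integrable_sumR d (T : measurableType d) (nu : {measure set T -> \bar R})
    (D : set T) (I : finType) (F : I -> T -> R) :
  measurable D -> (forall k, nu.-integrable D (EFin \o F k)) ->
  nu.-integrable D (EFin \o (fun x => \sum_k F k x)).
Proof.
move=> mD intF; rewrite (_ : EFin \o _ = fun x => \sum_k (EFin \o F k) x).
  exact: integrable_sum.
by apply/funext => x; rewrite /= sumEFin.
Qed.

Lemma itv0_ge0 (b : bool) (u : R) :
  [set` Interval (BLeft 0) (BSide b u)] `<=` [set x | 0 <= x].
Proof. by move=> x /=; rewrite in_itv/= => /andP[]. Qed.

Variables (b1 b2 : bool) (a b : R).
Hypothesis ab : a <= b.
Local Notation D := [set` Interval (BSide b1 a) (BSide b2 b)].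

Lemma lebesgue_measure_itv_le : mu D = (b - a)%:E.
Proof.
rewrite lebesgue_measure_itv/= lte_fin.
by case: ltP => // ba; rewrite (@le_anti _ _ a b) ?ab ?ba// subrr.
Qed.

Lemma integrable_itv_bounded (M : R) (f : R -> R) :
  measurable_fun D f -> (forall x, D x -> `|f x| <= M) ->
  mu.-integrable D (EFin \o f).
Proof.
move=> mf fM; apply: measurable_bounded_integrable => //.
  by have /= -> := lebesgue_measure_itv_le; rewrite ltry.
exists M; split; first exact: num_real.
by move=> M' MM' x Dx; apply: le_trans (fM x Dx) _; exact: ltW.
Qed.

Lemma Rintegral_itv_le (M : R) (f : R -> R) :
  mu.-integrable D (EFin \o f) -> (forall x, D x -> f x <= M) ->
  \int[mu]_(x in D) f x <= M * (b - a).
Proof.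
move=> intf fM; apply: le_trans (le_Rintegral _ intf _ fM) _ => //.
  by apply: (@integrable_itv_bounded `|M|) => //; exact: measurable_cst.
by rewrite Rintegral_cst//; have /= -> := lebesgue_measure_itv_le.
Qed.

End interval_integrals.

Lemma invrM_le1 (R : realFieldType) (u x : R) : 0 <= x -> x <= u -> u^-1 * x <= 1.
Proof.
move=> x0 xu; have [->|u_neq0] := eqVneq u 0; first by rewrite invr0 mul0r.
by rewrite ler_pdivrMl ?mulr1// lt_neqAle eq_sym u_neq0 (le_trans x0 xu).
Qed.

Lemma expRN_sub_le (R : realType) (a b : R) : 0 <= a -> a <= b ->
  expR (- a) - expR (- b) <= b - a.
Proof.
move=> a0 ab.
have -> : expR (- b) = expR (- a) * expR (- (b - a)) by rewrite -expRD; congr expR; ring.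
have := expR_ge1Dx (- (b - a)); have : expR (- a) <= 1 by rewrite expR_le1 oppr_le0.
have := expR_ge0 (- a); nra.
Qed.

Lemma exists_grid_cell (R : realDomainType) (h x : R) K : 0 < x -> x <= K%:R * h ->
  exists2 k, (k < K)%N & k%:R * h < x <= k.+1%:R * h.
Proof.
move=> x0; elim: K => [|K IH xK].
  by rewrite mul0r => /(lt_le_trans x0); rewrite ltxx.
have [xK'|Kx] := leP x (K%:R * h); last by exists K => //; rewrite Kx xK.
by have [k kK hk] := IH xK'; exists k => //; exact: ltnW.
Qed.

Lemma grid_preimage_trivIset (R : realDomainType) (T : Type) (f : T -> \bar R) (h : R) :
  0 <= h -> trivIset setT (fun k => f @^-1` `](k%:R * h)%:E, (k.+1%:R * h)%:E]).
Proof.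
move=> h0; have grid_le k k' : (k < k')%N -> ((k.+1%:R * h)%:E <= (k'%:R * h)%:E)%E.
  by move=> kk'; rewrite lee_fin ler_wpM2r// ler_nat.
move=> k k' _ _ [w []]; rewrite /= !in_itv/= => /andP[lo hi] /andP[lo' hi'].
case: (ltngtP k k') => // kk'.
  by have := lt_le_trans (le_lt_trans (grid_le _ _ kk') lo') hi; rewrite ltxx.
by have := lt_le_trans (le_lt_trans (grid_le _ _ kk') lo) hi'; rewrite ltxx.
Qed.

Lemma cst_le_integral d (T : measurableType d) (R : realType)
    (mu : {measure set T -> \bar R}) (D : set T) (f : T -> \bar R) (m : R) :
  measurable D -> measurable_fun D f -> 0 <= m -> (forall x, D x -> m%:E <= f x)%E ->
  (m%:E * mu D <= \int[mu]_(x in D) f x)%E.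
Proof.
by move=> mD mf m0 mf_ge; rewrite -integral_cst//; apply: ge0_le_integral.
Qed.

Lemma sum_cst_le_integral d (T : measurableType d) (R : realType)
    (mu : {measure set T -> \bar R}) (F : nat -> set T) (f : T -> \bar R)
    (m : nat -> R) K :
  (forall k, measurable (F k)) -> trivIset setT F ->
  measurable_fun (\big[setU/set0]_(k < K) F k) f ->
  (forall k, 0 <= m k) -> (forall k x, F k x -> (m k)%:E <= f x)%E ->
  (\sum_(k < K) (m k)%:E * mu (F k) <=
   \int[mu]_(x in \big[setU/set0]_(k < K) F k) f x)%E.
Proof.
move=> mF tF mf m0 mf_ge.
have f0 x : (\big[setU/set0]_(k < K) F k) x -> (0 <= f x)%E.
  rewrite -bigcup_mkord => -[k _ Fkx]; apply: le_trans (mf_ge k x Fkx).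
  by rewrite lee_fin.
move: mf f0; rewrite -(big_mkord xpredT F) => mf f0.
rewrite ge0_integral_bigsetU ?iota_uniq//; last exact: sub_trivIset tF.
rewrite big_mkord; apply: lee_sum => k _; apply: cst_le_integral => //.
  apply: measurable_funS mf => //; rewrite big_mkord.
    by apply: bigsetU_measurable => l _; exact: mF.
  by rewrite -(bigcup_mkord _ F) => x Fkx; exists k => /=.
by move=> x; exact: mf_ge.
Qed.

(** * Probabilities and independence *)

Section real_probability.
Context {R : realType} {d : measure_display} {T : measurableType d}.
Variable P : probability T R.

Definition pr (E : set T) : R := fine (P E).

Lemma prE E : measurable E -> P E = (pr E)%:E.
Proof.
move=> mE; rewrite /pr fineK// ge0_fin_numE ?measure_ge0//.
by rewrite (le_lt_trans (probability_le1 _ mE))// ltey.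
Qed.

Lemma pr_ge0 E : 0 <= pr E.
Proof. by rewrite /pr fine_ge0// measure_ge0. Qed.

Lemma pr_le1 E : measurable E -> pr E <= 1.
Proof. by move=> mE; rewrite -lee_fin -prE// probability_le1. Qed.

Lemma le_pr E F : measurable E -> measurable F -> E `<=` F -> pr E <= pr F.
Proof.
by move=> mE mF EF; rewrite -lee_fin -!prE//; apply: le_measure => //; rewrite inE.
Qed.

Lemma pr_setU E F : measurable E -> measurable F -> E `&` F = set0 ->
  pr (E `|` F) = pr E + pr F.
Proof.
move=> mE mF EF; apply: EFin_inj; rewrite EFinD -!prE//; last exact: measurableU.
by rewrite measureU.
Qed.

Lemma pr_setU_le E F : measurable E -> measurable F -> pr (E `|` F) <= pr E + pr F.
Proof.
move=> mE mF; rewrite -lee_fin EFinD -!prE//; last exact: measurableU.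
exact: measureU2.
Qed.

Lemma pr_setC E : measurable E -> pr (~` E) = 1 - pr E.
Proof.
move=> mE; apply: EFin_inj; rewrite -prE; last exact: measurableC.
by rewrite probability_setC// prE.
Qed.

Lemma pr_bigsetU (F : nat -> set T) m : (forall k, measurable (F k)) ->
  trivIset setT F -> pr (\big[setU/set0]_(k < m) F k) = \sum_(k < m) pr (F k).
Proof.
move=> mF tF; apply: EFin_inj; rewrite -prE; last exact: bigsetU_measurable.
by rewrite measure_bigsetU// -sumEFin; apply: eq_bigr => k _; exact: prE.
Qed.

End real_probability.

Section independence_from_the_others.
Context {R : realType} {n : nat} {d : measure_display} {T : measurableType d}.
Variables (P : probability T R) (alpha : 'I_n -> T -> \bar R).
Hypothesis malpha : forall l, measurable_fun setT (alpha l).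
Hypothesis indep : mutually_independent P alpha.

Definition others_rectangles (j : 'I_n) : set (set T) :=
  [set \bigcap_(l in [set: 'I_n]) alpha l @^-1` Bs l | Bs in
    [set Bs : 'I_n -> set (\bar R) | (forall l, measurable (Bs l)) /\ Bs j = setT]].

Lemma measurable_alpha_preimage l (Y : set (\bar R)) : measurable Y ->
  measurable (alpha l @^-1` Y).
Proof. by move=> mY; rewrite -[X in measurable X]setTI; exact: malpha. Qed.

Lemma others_rectangles_setI_closed j : setI_closed (others_rectangles j).
Proof.
move=> _ _ [Bs [mBs Bsj] <-] [Cs [mCs Csj] <-].
exists (fun l => Bs l `&` Cs l).
  by split=> [l|]; [exact: measurableI|rewrite Bsj Csj setIT].
by rewrite -bigcapI; apply: eq_bigcapr => l _; rewrite preimage_setI.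
Qed.

Lemma measurable_others_rectangle j E : others_rectangles j E -> measurable E.
Proof.
move=> [Bs [mBs _] <-]; apply: fin_bigcap_measurable; first exact: finite_finset.
by move=> l _; exact: measurable_alpha_preimage.
Qed.

Lemma others_sigma_measurable j E : <<s others_rectangles j >> E -> measurable E.
Proof.
apply: smallest_sub; first exact: sigma_algebra_measurable.
exact: measurable_others_rectangle.
Qed.

Lemma others_rectangle_indep j (Y : set (\bar R)) E : measurable Y ->
  others_rectangles j E -> P (E `&` alpha j @^-1` Y) = (P E * P (alpha j @^-1` Y))%E.
Proof.
move=> mY [Bs [mBs Bsj] <-].
pose Cs l := if l == j then Y else Bs l.
have mCs l : measurable (Cs l) by rewrite /Cs; case: ifP.
have -> : \bigcap_(l in [set: 'I_n]) alpha l @^-1` Bs l `&` alpha j @^-1` Y =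
    \bigcap_(l in [set: 'I_n]) alpha l @^-1` Cs l.
  rewrite (bigcap_setD1 j)// [RHS](bigcap_setD1 j)// /Cs eqxx Bsj preimage_setT.
  rewrite setTI setIC; congr (_ `&` _).
  by apply: eq_bigcapr => l [_ /eqP/negPf ->].
rewrite !indep// (bigD1 j)//= [in RHS](bigD1 j)//= /Cs eqxx Bsj.
rewrite preimage_setT probability_setT mul1e muleC; congr (_ * _)%E.
by apply: eq_bigr => l /negPf ->.
Qed.

Lemma others_sigma_indep j (Y : set (\bar R)) E : measurable Y ->
  <<s others_rectangles j >> E ->
  P (E `&` alpha j @^-1` Y) = (P E * P (alpha j @^-1` Y))%E.
Proof.
move=> mY sE; have mYj := measurable_alpha_preimage j mY.
pose indep_of_Y : set (set T) := fun F => measurable F /\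
  (P (F `&` alpha j @^-1` Y) = P F * P (alpha j @^-1` Y))%E.
suff : <<s others_rectangles j >> `<=` indep_of_Y by move=> /(_ _ sE) [].
apply: lambda_system_subset => //; first exact: others_rectangles_setI_closed.
- apply/dynkin_lambda_system; split.
  + by split => //; rewrite setTI probability_setT mul1e.
  + move=> F [mF FY]; split; first exact: measurableC.
    have mFY : measurable (F `&` alpha j @^-1` Y) by exact: measurableI.
    have mCFY : measurable (~` F `&` alpha j @^-1` Y).
      by apply: measurableI => //; exact: measurableC.
    rewrite (prE P mCFY) (prE P (measurableC mF)) (prE P mYj) -EFinM; congr EFin.
    have : pr P (alpha j @^-1` Y) =
        pr P (F `&` alpha j @^-1` Y) + pr P (~` F `&` alpha j @^-1` Y).
      rewrite -pr_setU//; last by rewrite setIACA setICr set0I.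
      by rewrite -setIUl setUv setTI.
    move: FY; rewrite (prE P mFY) (prE P mF) (prE P mYj) -EFinM pr_setC// => -[].
    lra.
  + move=> F tF FY; split.
      by apply: bigcup_measurable => k _; have [] := FY k.
    rewrite setI_bigcupl measure_bigcup//; last 2 first.
    - by move=> k _; apply: measurableI => //; have [] := FY k.
    - exact: trivIset_setIr.
    rewrite measure_bigcup//; last by move=> k _; have [] := FY k.
    rewrite (prE P mYj) muleC -nneseriesZl; last by move=> k _; exact: measure_ge0.
    by apply: eq_eseriesr => k _; case: (FY k) => _ /= ->; rewrite (prE P mYj) muleC.
- move=> E' rE'; split; first exact: measurable_others_rectangle rE'.
  exact: others_rectangle_indep.
Qed.

Lemma pr_others_indep j (Y : set (\bar R)) E : measurable Y ->
  <<s others_rectangles j >> E ->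
  pr P (E `&` alpha j @^-1` Y) = pr P E * pr P (alpha j @^-1` Y).
Proof.
move=> mY sE; have mE := others_sigma_measurable sE.
have mYj := measurable_alpha_preimage j mY.
apply: EFin_inj; rewrite EFinM -!prE//; last exact: measurableI.
exact: others_sigma_indep.
Qed.

Lemma measurable_others j l : l != j ->
  measurable_fun (setT : set (g_sigma_algebraType (others_rectangles j))) (alpha l).
Proof.
move=> lj _ Y mY; rewrite setTI; apply: sub_sigma_algebra.
exists (fun m => if m == l then Y else setT).
  by split=> [m|]; [case: ifP|rewrite eq_sym (negPf lj)].
apply/seteqP; split => w /=; last by move=> Yw m _; case: eqP => [->|].
by move=> h; have := h l I; rewrite eqxx.
Qed.

End independence_from_the_others.

(** * Cumulative Poisson rates *)

Section box_rate.
Variable R : realType.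
Local Notation mu := (@lebesgue_measure R).
Variables (X : R -> R) (c : R).
Hypothesis c_gt0 : 0 < c.
Hypothesis X_ge0_le1 : forall t, 0 <= t -> 0 <= X t <= 1.
Hypothesis X_nd : forall s t, 0 <= s -> s <= t -> X s <= X t.

Definition busy (t : R) : R := X t - X (Num.max (t - c) 0).

Definition busy_time (u : R) : R := \int[mu]_(t in `[0, u]) busy t.

Lemma busy_ge0_le1 t : 0 <= t -> 0 <= busy t <= 1.
Proof.
move=> t0; have tc0 : 0 <= Num.max (t - c) 0 by rewrite le_max lexx orbT.
have tct : Num.max (t - c) 0 <= t by rewrite ge_max t0 andbT lerBlDr lerDl ltW.
have := X_ge0_le1 t0; have := X_ge0_le1 tc0; have := X_nd tc0 tct.
rewrite /busy; lra.
Qed.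

Lemma measurable_busy (D : set R) : measurable D -> D `<=` [set x | 0 <= x] ->
  measurable_fun D busy.
Proof.
move=> mD D0; pose X0 t := X (Num.max t 0).
have X0_nd : {homo X0 : x y / x <= y}.
  by move=> x y xy; apply: X_nd; [rewrite le_max lexx orbT|exact: le_max2].
apply: (@eq_measurable_fun _ _ _ _ D (fun t => X0 t - X0 (t - c))).
  by move=> x /set_mem /D0 /= x0; rewrite /busy /X0 max_l.
apply: measurable_funB; first exact: nondecreasing_measurable.
by apply: nondecreasing_measurable => // x y xy; rewrite X0_nd// lerD2r.
Qed.

Lemma integrable_busy u : 0 <= u -> mu.-integrable `[0, u] (EFin \o busy).
Proof.
move=> u0; apply: (@integrable_itv_bounded _ _ _ _ _ u0 1).
  by apply: measurable_busy => //; exact: itv0_ge0.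
by move=> x /itv0_ge0 /busy_ge0_le1 /andP[b0 b1]; rewrite ger0_norm.
Qed.

Lemma busy_time_ge0_le u : 0 <= u -> 0 <= busy_time u <= u.
Proof.
move=> u0; apply/andP; split.
  by apply: Rintegral_ge0 => x /itv0_ge0 /busy_ge0_le1 /andP[].
rewrite -[leRHS]mul1r -[u in 1 * u]subr0.
apply: Rintegral_itv_le => //; first exact: integrable_busy.
by move=> x /itv0_ge0 /busy_ge0_le1 /andP[].
Qed.

Lemma busy_time_nd u u' : 0 <= u -> u <= u' -> busy_time u <= busy_time u'.
Proof.
move=> u0 uu'; rewrite -subr_ge0 /busy_time.
rewrite (@Rintegral_itvB _ _ (BLeft 0) (BRight u') u) ?bnd_simp//; last first.
  exact/integrable_busy/(le_trans u0).
apply: Rintegral_ge0 => x /=; rewrite in_itv/= => /andP[ux _].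
by have /andP[] := busy_ge0_le1 (le_trans u0 (ltW ux)).
Qed.

Lemma xbarE u : xbar X c u = u^-1 * busy_time u.
Proof. by []. Qed.

Lemma xbar_ge0_le1 u : 0 <= u -> 0 <= xbar X c u <= 1.
Proof.
move=> u0; rewrite xbarE; have /andP[g0 gu] := busy_time_ge0_le u0.
by rewrite mulr_ge0 ?invr_ge0//= invrM_le1.
Qed.

Lemma measurable_xbar : measurable_fun (`[0, +oo[ : set R) (xbar X c).
Proof.
apply: (@eq_measurable_fun _ _ _ _ _
  (fun u => u `^ (-1) * busy_time (Num.max u 0))) => //.
  move=> u /set_mem /=; rewrite in_itv/= andbT => u0.
  by rewrite xbarE powR_inv1// max_l.
apply: measurable_funM; first exact: measurable_funS (measurable_powR _).
apply: (measurable_funS measurableT) => //.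
apply: nondecreasing_measurable => // x y xy.
by apply: busy_time_nd; [rewrite le_max lexx orbT|exact: le_max2].
Qed.

Lemma poisson_rate_ge0_le tau : 0 <= tau -> 0 <= poisson_rate X c tau <= c^-1.
Proof.
move=> tau0; have /andP[x0 x1] := xbar_ge0_le1 (divr_ge0 tau0 (ler0n _ 2)).
have c0 : 0 <= c^-1 by rewrite invr_ge0 ltW.
by rewrite /poisson_rate mulr_ge0//= ler_piMr.
Qed.

Lemma integrable_xbar_half t : 0 <= t ->
  mu.-integrable `[0, t] (EFin \o (fun tau => xbar X c (tau / 2))).
Proof.
move=> t0; apply: (@integrable_itv_bounded _ _ _ _ _ t0 1); last first.
  move=> x /itv0_ge0 x0; have /andP[r0 r1] := xbar_ge0_le1 (divr_ge0 x0 (ler0n _ 2)).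
  by rewrite ger0_norm.
apply: (measurable_comp _ _ measurable_xbar) => //.
- by move=> _ [x /itv0_ge0 /= x0 <-]; rewrite in_itv/= andbT divr_ge0.
- exact: mulrr_measurable.
Qed.

Lemma integrable_poisson_rate t : 0 <= t ->
  mu.-integrable `[0, t] (EFin \o poisson_rate X c).
Proof. by move=> t0; apply: (integrableZl _ _ (integrable_xbar_half t0)). Qed.

Lemma cum_rateE t : 0 <= t ->
  cum_rate X c t = c^-1 * \int[mu]_(tau in `[0, t]) xbar X c (tau / 2).
Proof. by move=> t0; rewrite -RintegralZl//; exact: integrable_xbar_half. Qed.

Lemma cum_rate_ge0 s : 0 <= s -> 0 <= cum_rate X c s.
Proof.
by move=> s0; apply: Rintegral_ge0 => x /itv0_ge0 /poisson_rate_ge0_le /andP[].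
Qed.

Lemma cum_rate_increment s t : 0 <= s -> s <= t ->
  0 <= cum_rate X c t - cum_rate X c s <= (t - s) / c.
Proof.
move=> s0 st; have t0 := le_trans s0 st.
rewrite /cum_rate (@Rintegral_itvB _ _ (BLeft 0) (BRight t) s) ?bnd_simp//; last first.
  exact: integrable_poisson_rate.
have st0 : `]s, t] `<=` [set x | 0 <= x].
  by move=> x /=; rewrite in_itv/= => /andP[sx _]; rewrite (le_trans s0)// ltW.
apply/andP; split.
  by apply: Rintegral_ge0 => x /st0 /poisson_rate_ge0_le /andP[].
rewrite mulrC; apply: Rintegral_itv_le => //; last first.
  by move=> x /st0 /poisson_rate_ge0_le /andP[].
apply: integrableS (integrable_poisson_rate t0) => //.
by move=> x /=; rewrite !in_itv/= => /andP[sx ->]; rewrite (le_trans s0)// ltW.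
Qed.

End box_rate.

Section gcp_rates.
Variable R : realType.
Local Notation mu := (@lebesgue_measure R).
Variables (n : nat) (c : 'I_n -> R) (X : 'I_n -> R -> R).
Hypothesis c_gt0 : forall j, 0 < c j.
Hypothesis feasX : feasible_GCP c X.

Lemma sum_xbar_le1 u : 0 <= u -> \sum_j xbar (X j) (c j) u <= 1.
Proof.
move=> u0; case: feasX => X01 [Xnd feas1].
have intB j := integrable_busy (c_gt0 j) (X01 j) (Xnd j) u0.
under eq_bigr do rewrite xbarE.
rewrite -mulr_sumr; apply: invrM_le1.
  apply: sumr_ge0 => j _.
  by have /andP[] := busy_time_ge0_le (c_gt0 j) (X01 j) (Xnd j) u0.
rewrite /busy_time -Rintegral_sum// -[leRHS]mul1r -[u in 1 * u]subr0.
apply: Rintegral_itv_le => //; first exact: integrable_sumR.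
by move=> x /itv0_ge0 /feas1.
Qed.

Lemma gcp_cum_rate_ge0 j s : 0 <= s -> 0 <= cum_rate (X j) (c j) s.
Proof.
move=> s0; case: feasX => X01 [Xnd _].
exact: (cum_rate_ge0 (c_gt0 j) (X01 j) (Xnd j) s0).
Qed.

Lemma gcp_cum_rate_increment j s t : 0 <= s -> s <= t ->
  0 <= cum_rate (X j) (c j) t - cum_rate (X j) (c j) s <= (t - s) / c j.
Proof.
move=> s0 st; case: feasX => X01 [Xnd _].
exact: (cum_rate_increment (c_gt0 j) (X01 j) (Xnd j) s0 st).
Qed.

Lemma sum_cum_rate_le t : 0 <= t -> \sum_j c j * cum_rate (X j) (c j) t <= t.
Proof.
move=> t0; case: feasX => X01 [Xnd _].
have intX j := integrable_xbar_half (c_gt0 j) (X01 j) (Xnd j) t0.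
under eq_bigr => j _.
  rewrite (cum_rateE (c_gt0 j) (X01 j) (Xnd j) t0) mulrA divff ?gt_eqF// mul1r.
  over.
rewrite -Rintegral_sum// -[leRHS]mul1r -[t in 1 * t]subr0.
apply: Rintegral_itv_le => //; first exact: integrable_sumR.
by move=> x /itv0_ge0 x0; apply: sum_xbar_le1; rewrite divr_ge0.
Qed.

End gcp_rates.

(** * Events of Balanced Stopping *)

Section stopping_events.
Context {R : realType} {n : nat} {d : measure_display} {T : measurableType d}.
Variables (c v : 'I_n -> R) (alpha : 'I_n -> T -> \bar R).
Local Notation tau := (tau_box c v alpha).
Local Notation tau_st := (tau_star c v alpha).

Lemma tau_star_le_tau_box k w : (tau_st w <= tau k w)%E.
Proof. exact: bigmin_le. Qed.

Lemma le_tau_box k w : ((c k + v k)%:E <= tau k w)%E.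
Proof. by rewrite /tau_box le_max lexx orbT. Qed.

Lemma measurable_lteif (f g : T -> \bar R) (C : bool) :
  measurable_fun setT f -> measurable_fun setT g ->
  measurable [set w | (f w < g w ?<= if C)%O].
Proof.
move=> mf mg; rewrite -[X in measurable X]setTI.
by case: C; [exact: measurable_lee|exact: measurable_lte].
Qed.

Lemma measurable_tau_box k : measurable_fun setT (alpha k) ->
  measurable_fun setT (tau k).
Proof. by move=> ma; apply: measurable_maxe => //; exact: measurable_cst. Qed.

Lemma measurable_tau_box_preimage k (Y : set (\bar R)) :
  measurable_fun setT (alpha k) -> measurable Y -> measurable (tau k @^-1` Y).
Proof. by move=> ma mY; rewrite -[X in measurable X]setTI; exact: measurable_tau_box. Qed.

Lemma measurable_tau_star : (forall k, measurable_fun setT (alpha k)) ->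
  measurable_fun setT tau_st.
Proof.
move=> malpha; rewrite /tau_star; elim: (index_enum _) => [|k s IH].
  by under eq_fun do rewrite big_nil; exact: measurable_cst.
under eq_fun do rewrite big_cons.
by apply: measurable_mine => //; exact: measurable_tau_box.
Qed.

Variable i : 'I_n.

Definition precedes (l : 'I_n) : set T :=
  [set w | (tau i w < tau l w ?<= if (i <= l)%N)%O].

Lemma takenP w : taken c v alpha i w <-> forall l, precedes l w.
Proof.
split=> [[e lt_ts] l|ih].
  by rewrite /precedes /= e; case: leqP => [_|/lt_ts//]; exact: tau_star_le_tau_box.
have e : tau i w = tau_st w.
  apply/eqP; rewrite eq_le tau_star_le_tau_box andbT.
  apply/bigmin_geP; split; first exact: leey.
  by move=> l _; exact: lteifW (ih l).
by split=> // l li; rewrite -e; have := ih l; rewrite /precedes /= leqNgt li.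
Qed.

Lemma tau_star_taken w : taken c v alpha i w -> tau_st w = tau i w.
Proof. by case. Qed.

Lemma measurable_precedes l : measurable_fun setT (alpha i) ->
  measurable_fun setT (alpha l) -> measurable (precedes l).
Proof. by move=> mi ml; apply: measurable_lteif; exact: measurable_tau_box. Qed.

(* [i] beats [j] already against [beta_j <= tau_j], whatever [alpha_j] is. *)
Definition safe (j : 'I_n) : set T :=
  [set w | (tau i w < (c j + v j)%:E ?<= if (i <= j)%N)%O].

Lemma measurable_safe j : measurable_fun setT (alpha i) -> measurable (safe j).
Proof.
by move=> mi; apply: measurable_lteif; [exact: measurable_tau_box|exact: measurable_cst].
Qed.

Definition opened (j : 'I_n) : set T := [set w | (alpha j w <= tau_st w)%E].

Lemma measurable_opened j : (forall l, measurable_fun setT (alpha l)) ->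
  measurable (opened j).
Proof.
move=> malpha; rewrite -[X in measurable X]setTI.
by apply: measurable_lee => //; exact: measurable_tau_star.
Qed.

Lemma opening_costE w : opening_cost c v alpha w =
  (\sum_j (c j * \1_(opened j) w)%:E)%E.
Proof.
rewrite /opening_cost big_mkcond; apply: eq_bigr => j _; rewrite indicE.
have -> : (w \in opened j) = (alpha j w <= tau_st w)%E.
  by apply/idP/idP => [/set_mem|/mem_set].
by case: ifP; rewrite ?mulr1 ?mulr0.
Qed.

Variable B : set (\bar R).

Definition taken_event : set T := [set w | taken c v alpha i w /\ B (tau_st w)].

Lemma taken_eventE :
  taken_event = \bigcap_(l in setT) precedes l `&` tau i @^-1` B.
Proof.
apply/seteqP; split=> w /=.
  move=> [tk Bw]; split=> [l _|]; first exact: (proj1 (takenP w) tk).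
  by rewrite -tau_star_taken.
move=> [prec Bw]; have tk : taken c v alpha i w by apply/takenP => l; exact: prec.
by split=> //; rewrite tau_star_taken.
Qed.

Lemma measurable_taken_event : measurable B ->
  (forall l, measurable_fun setT (alpha l)) -> measurable taken_event.
Proof.
move=> mB malpha; rewrite taken_eventE; apply: measurableI.
  apply: fin_bigcap_measurable; first exact: finite_finset.
  by move=> l _; exact: measurable_precedes.
exact: measurable_tau_box_preimage.
Qed.

Definition cell (lo hi : R) : set T :=
  taken_event `&` tau i @^-1` `]lo%:E, hi%:E].

Definition cell_without (j : 'I_n) (lo hi : R) : set T :=
  tau i @^-1` (`]lo%:E, hi%:E] `&` B) `&` \bigcap_(l in [set l | l != j]) precedes l.

Lemma measurable_cell lo hi : measurable B ->
  (forall l, measurable_fun setT (alpha l)) -> measurable (cell lo hi).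
Proof.
move=> mB malpha; apply: measurableI; first exact: measurable_taken_event.
by apply: measurable_tau_box_preimage => //; exact: emeasurable_itv.
Qed.

Lemma cellE j lo hi : cell lo hi = cell_without j lo hi `&` precedes j.
Proof.
rewrite /cell taken_eventE; apply/seteqP; split=> w /=.
  by move=> [[prec Bw] itv]; split=> [|]; [split=> // l _; exact: prec|exact: prec].
move=> [[[itv Bw] prec] precj]; split=> //; split=> // l _.
by have [->//|lj] := eqVneq l j; exact: prec.
Qed.

Lemma cell_without_safe_sub j lo hi :
  cell_without j lo hi `&` safe j `<=` cell lo hi.
Proof.
rewrite (cellE j) => w [cw sj]; split=> //.
move: sj; rewrite /safe /precedes /=; have := le_tau_box j w.
by case: (i <= j)%N => tj ij; [exact: le_trans ij tj|exact: lt_le_trans ij tj].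
Qed.

(* If alpha_j <= lo < tau_i <= tau_j then tau_j = beta_j, so whether i beats j
   no longer depends on alpha_j. *)
Lemma cell_opened_sub j lo hi : cell lo hi `&` opened j `<=`
  (cell_without j lo hi `&` safe j `&` alpha j @^-1` `]-oo, lo%:E]) `|`
  (tau i @^-1` `]lo%:E, hi%:E] `&` alpha j @^-1` `]lo%:E, hi%:E]).
Proof.
move=> w [cw]; rewrite /opened /= => aj.
have [[tk _] itv] := cw; rewrite (tau_star_taken tk) in aj.
move: itv; rewrite /= in_itv/= => /andP[lo_t t_hi].
move: cw; rewrite (cellE j) => -[cwj precj].
have [aj_lo|lo_aj] := leP (alpha j w) lo%:E; [left|right].
  split; last by rewrite /= in_itv.
  split=> //; move: precj; rewrite /precedes /safe /= lteif_maxr => /orP[|//].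
  by move=> /lteifW /(lt_le_trans (le_lt_trans aj_lo lo_t)); rewrite ltxx.
by split; rewrite ?in_itv/= ?lo_t ?t_hi// lo_aj (le_trans aj t_hi).
Qed.

Lemma measurable_cell_without j lo hi : measurable B -> i != j ->
  (forall l, l != j -> measurable_fun setT (alpha l)) ->
  measurable (cell_without j lo hi).
Proof.
move=> mB ij malpha; apply: measurableI.
  apply: measurable_tau_box_preimage; first exact: malpha.
  by apply: measurableI => //; exact: emeasurable_itv.
apply: fin_bigcap_measurable; first exact: finite_finset.
by move=> l /= lj; apply: measurable_precedes; apply: malpha.
Qed.

End stopping_events.

(** * Expected opening cost *)

Section balanced_stopping_cost.
Context {R : realType} {n : nat} {d : measure_display} {T : measurableType d}.
Variables (c v : 'I_n -> R) (X : 'I_n -> R -> R).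
Variables (P : probability T R) (alpha : 'I_n -> T -> \bar R).
Hypothesis c_gt0 : forall j, 0 < c j.
Hypothesis feasX : feasible_GCP c X.
Hypothesis malpha : forall j, measurable_fun setT (alpha j).
Hypothesis indep : mutually_independent P alpha.
Hypothesis survival : forall j (s : R), 0 <= s ->
  P [set w | (s%:E < alpha j w)%E] = (expR (- cum_rate (X j) (c j) s))%:E.

Local Notation Lambda j := (cum_rate (X j) (c j)).
Local Notation pr := (pr P).

Lemma measurable_alpha_gt j (s : R) : measurable [set w | (s%:E < alpha j w)%E].
Proof.
by rewrite -[X in measurable X]setTI; apply: measurable_lte => //; exact: measurable_cst.
Qed.

Lemma pr_survival j s : 0 <= s ->
  pr [set w | (s%:E < alpha j w)%E] = expR (- Lambda j s).
Proof. by move=> s0; rewrite /pr survival. Qed.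

Lemma pr_alpha_le_cum_rate j t : 0 <= t -> pr (alpha j @^-1` `]-oo, t%:E]) <= Lambda j t.
Proof.
move=> t0; have -> : alpha j @^-1` `]-oo, t%:E] = ~` [set w | (t%:E < alpha j w)%E].
  by apply/seteqP; split=> w /=; rewrite in_itv/= leNgt => /negP.
rewrite pr_setC ?pr_survival//; last exact: measurable_alpha_gt.
have := expR_ge1Dx (- Lambda j t); lra.
Qed.

Lemma pr_alpha_itv_le j s t : 0 <= s -> s <= t ->
  pr (alpha j @^-1` `]s%:E, t%:E]) <= (t - s) / c j.
Proof.
move=> s0 st; have t0 := le_trans s0 st.
have gt_split : [set w | (s%:E < alpha j w)%E] =
    alpha j @^-1` `]s%:E, t%:E] `|` [set w | (t%:E < alpha j w)%E].
  apply/seteqP; split=> w /=; rewrite in_itv/=.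
    by move=> sa; case: (leP (alpha j w) t%:E) => _; [left; rewrite sa|right].
  by case=> [/andP[]//|]; apply: le_lt_trans; rewrite lee_fin.
have mI := measurable_alpha_preimage malpha j (emeasurable_itv `]s%:E, t%:E]).
have disj : alpha j @^-1` `]s%:E, t%:E] `&` [set w | (t%:E < alpha j w)%E] = set0.
  apply/seteqP; split=> w //= [+ ta]; rewrite in_itv/= => /andP[_].
  by rewrite leNgt ta.
have := pr_setU P mI (measurable_alpha_gt j t) disj.
rewrite -gt_split !pr_survival// => e.
have /andP[Lst Lst'] := gcp_cum_rate_increment c_gt0 feasX j s0 st.
have := expRN_sub_le (gcp_cum_rate_ge0 c_gt0 feasX j s0) (_ : Lambda j s <= Lambda j t).
lra.
Qed.

Variables (i : 'I_n) (B : set (\bar R)).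
Hypothesis mB : measurable B.

Local Notation tau := (tau_box c v alpha).
Local Notation cell := (cell c v alpha i B).

Lemma pr_cell_opened j lo hi : i != j -> 0 <= lo -> lo <= hi ->
  pr (cell lo hi `&` opened c v alpha j) <=
  pr (cell lo hi) * Lambda j lo + pr (tau i @^-1` `]lo%:E, hi%:E]) * ((hi - lo) / c j).
Proof.
move=> ij lo0 lohi.
(* Measurability in [S] puts events in the sigma-algebra generated by the
   arrival times of the boxes other than j, which is independent of alpha_j. *)
pose S := g_sigma_algebraType (others_rectangles alpha j).
have malphaS l : l != j -> measurable_fun (setT : set S) (alpha l).
  exact: measurable_others.
have sW : <<s others_rectangles alpha j >> (tau i @^-1` `]lo%:E, hi%:E]).
  apply: (@measurable_tau_box_preimage _ _ _ S); first exact: malphaS.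
  exact: emeasurable_itv.
have sVG : <<s others_rectangles alpha j >>
    (cell_without c v alpha i B j lo hi `&` safe c v alpha i j).
  apply: (@measurableI _ S).
    exact: (@measurable_cell_without _ _ _ S).
  by apply: (@measurable_safe _ _ _ S); exact: malphaS.
set VG := _ `&` safe _ _ _ _ _ in sVG; set W := _ @^-1` _ in sW.
have mVG := others_sigma_measurable malpha sVG.
have mW := others_sigma_measurable malpha sW.
have mle := measurable_alpha_preimage malpha j (emeasurable_itv `]-oo, lo%:E]).
have mitv := measurable_alpha_preimage malpha j (emeasurable_itv `]lo%:E, hi%:E]).
have mcell : measurable (cell lo hi) by exact: measurable_cell.
have mCO : measurable (cell lo hi `&` opened c v alpha j).
  by apply: measurableI => //; exact: measurable_opened.
have sub := @cell_opened_sub _ _ _ _ c v alpha i B j lo hi.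
apply: (le_trans (le_pr P mCO _ sub)).
  by apply: measurableU; apply: measurableI.
apply: le_trans (pr_setU_le _ _ _) _; [exact: measurableI|exact: measurableI|].
rewrite (pr_others_indep malpha indep (emeasurable_itv _) sVG).
rewrite (pr_others_indep malpha indep (emeasurable_itv _) sW).
apply: lerD; apply: ler_pM; rewrite ?pr_ge0 ?pr_alpha_le_cum_rate ?pr_alpha_itv_le//.
by apply: le_pr => //; exact: cell_without_safe_sub.
Qed.

Hypothesis v_ge0 : forall j, 0 <= v j.
Variables (h : R) (K : nat).
Hypothesis h_gt0 : 0 < h.

Local Notation A := (taken_event c v alpha i B).
Local Notation opened := (opened c v alpha).
Local Notation grid k := (k%:R * h).
Local Notation gcell k := (cell (grid k) (grid k.+1)).
Local Notation low := (A `&` tau i @^-1` `]-oo, (grid K)%:E]).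
Local Notation high := (A `&` tau i @^-1` `](grid K)%:E, +oo%E]).

Lemma measurable_A : measurable A.
Proof. exact: measurable_taken_event. Qed.

Lemma trivIset_gcell : trivIset setT (fun k => gcell k).
Proof. exact/trivIset_setIl/grid_preimage_trivIset/ltW. Qed.

Lemma lowE : low = \big[setU/set0]_(k < K) gcell k.
Proof.
rewrite -(bigcup_mkord _ (fun k => gcell k)); apply/seteqP.
split=> [w [Aw]|w [k /= kK [Aw]]]; last first.
  rewrite /= !in_itv/= => /andP[_ le]; split=> //=; rewrite ?in_itv/=.
  by apply: le_trans le _; rewrite lee_fin ler_wpM2r ?ler_nat// ltW.
rewrite /= in_itv/= => tK.
suff [k kK itv] : exists2 k, (k < K)%N & ((grid k)%:E < tau i w <= (grid k.+1)%:E)%E.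
  by exists k => //; split=> //=; rewrite in_itv.
move: tK (le_tau_box c v alpha i w); case: (tau i w) => [x||] //=.
rewrite !lee_fin => xK bx; have x0 : 0 < x by apply: lt_le_trans bx; rewrite ltr_wpDr.
by have [k kK itv] := exists_grid_cell x0 xK; exists k; rewrite ?lte_fin ?lee_fin.
Qed.

Lemma pr_low_opened j : i != j ->
  pr (low `&` opened j) <= \sum_(k < K) pr (gcell k) * Lambda j (grid k) + h / c j.
Proof.
move=> ij; have h0 := ltW h_gt0.
have grid_ge0 k : 0 <= grid k by rewrite mulr_ge0.
have grid_step k : grid k.+1 - grid k = h.
  by rewrite -natr1 mulrDl mul1r addrAC subrr add0r.
have mW k : measurable (tau i @^-1` `](grid k)%:E, (grid k.+1)%:E]).
  by apply: measurable_tau_box_preimage => //; exact: emeasurable_itv.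
rewrite lowE -(bigcup_mkord _ (fun k => gcell k)) setI_bigcupl bigcup_mkord.
rewrite (@pr_bigsetU _ _ _ P (fun k => gcell k `&` opened j)); first last.
- exact/trivIset_setIr/trivIset_gcell.
- by move=> k; apply: measurableI; [exact: measurable_cell|exact: measurable_opened].
have grid_le k : grid k <= grid k.+1 by rewrite ler_wpM2r// ler_nat.
have cell_le (k : 'I_K) := pr_cell_opened ij (grid_ge0 k) (grid_le k).
apply: le_trans (ler_sum _ (fun k _ => cell_le k)) _.
rewrite big_split /= lerD2l; under eq_bigr do rewrite grid_step.
rewrite -mulr_suml ler_piMl ?divr_ge0 ?(ltW (c_gt0 j))//.
rewrite -(pr_bigsetU P K mW (grid_preimage_trivIset h0)).
by apply: pr_le1; apply: bigsetU_measurable => k _; exact: mW.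
Qed.

Lemma low_high_partition : A = low `|` high /\ low `&` high = set0.
Proof.
split; apply/seteqP; split=> w //=.
- move=> Aw; rewrite !in_itv/= leey andbT.
  by case: leP => tK; [left|right].
- by case=> -[].
- move=> [[_ +] [_ +]]; rewrite !in_itv/= leey andbT => tK Kt.
  by have := le_lt_trans tK Kt; rewrite ltxx.
Qed.

Lemma measurable_A_tau_preimage (Y : set (\bar R)) : measurable Y ->
  measurable (A `&` tau i @^-1` Y).
Proof.
move=> mY; apply: measurableI; first exact: measurable_A.
exact: measurable_tau_box_preimage.
Qed.

Lemma pr_opened j : i != j -> pr (A `&` opened j) <=
  pr high + \sum_(k < K) pr (gcell k) * Lambda j (grid k) + h / c j.
Proof.
move=> ij; have [AE disj] := low_high_partition.
have mO : measurable (opened j) by exact: measurable_opened.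
have mL := measurable_A_tau_preimage (emeasurable_itv `]-oo, (grid K)%:E]).
have mH := measurable_A_tau_preimage (emeasurable_itv `](grid K)%:E, +oo%E]).
have mLO := measurableI _ _ mL mO; have mHO := measurableI _ _ mH mO.
rewrite {1}AE setIUl pr_setU//; last by rewrite setIACA disj set0I.
rewrite addrC -addrA; apply: lerD; last exact: pr_low_opened.
by apply: le_pr => // w [].
Qed.

Lemma sum_pr_opened : \sum_j c j <= grid K ->
  \sum_j c j * pr (A `&` opened j) <=
  c i * pr A + grid K * pr high + \sum_(k < K) grid k * pr (gcell k) + n%:R * h.
Proof.
move=> CK; have c0 j := ltW (c_gt0 j); have h0 := ltW h_gt0.
have grid_ge0 k : 0 <= grid k by rewrite mulr_ge0.
pose g j := c j * pr high + \sum_(k < K) pr (gcell k) * (c j * Lambda j (grid k)) + h.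
have g_ge0 j : 0 <= g j.
  rewrite /g !addr_ge0 ?mulr_ge0 ?pr_ge0//.
  by apply: sumr_ge0 => k _; rewrite !mulr_ge0 ?pr_ge0 ?gcp_cum_rate_ge0.
have le_g j : j != i -> c j * pr (A `&` opened j) <= g j.
  move=> ji; have ij : i != j by rewrite eq_sym.
  have := ler_wpM2l (c0 j) (pr_opened ij).
  rewrite /g !mulrDr mulr_sumr mulrCA divff ?gt_eqF// mulr1.
  by under eq_bigr do rewrite mulrCA.
have sum_g : \sum_j g j = (\sum_j c j) * pr high +
    \sum_(k < K) pr (gcell k) * (\sum_j c j * Lambda j (grid k)) + n%:R * h.
  rewrite !big_split /= -mulr_suml exchange_big /= sumr_const card_ord.
  by congr (_ + _ + _); [apply: eq_bigr => k _; rewrite mulr_sumr|rewrite mulr_natl].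
have le_sum_g : \sum_(j | j != i) c j * pr (A `&` opened j) <= \sum_j g j.
  rewrite [leRHS](bigD1 i)//=; apply: le_trans (ler_sum _ le_g) _.
  by rewrite lerDr.
have le_i : c i * pr (A `&` opened i) <= c i * pr A.
  have mA := measurable_A; have mO : measurable (opened i) by exact: measurable_opened.
  by rewrite ler_wpM2l//; apply: le_pr => //; exact: measurableI.
have le_grid : \sum_(k < K) pr (gcell k) * (\sum_j c j * Lambda j (grid k)) <=
    \sum_(k < K) grid k * pr (gcell k).
  apply: ler_sum => k _; rewrite mulrC ler_wpM2r ?pr_ge0//.
  exact: sum_cum_rate_le.
have le_high : (\sum_j c j) * pr high <= grid K * pr high by rewrite ler_wpM2r ?pr_ge0.
rewrite (bigD1 i)//=; lra.
Qed.

Local Notation tau_st := (tau_star c v alpha).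

Lemma tau_star_gt0 w : A w -> (0 < tau_st w)%E.
Proof.
move=> [tk _]; rewrite (tau_star_taken tk); apply: lt_le_trans (le_tau_box _ _ _ _ _).
by rewrite lte_fin ltr_wpDr.
Qed.

Lemma integral_tau_star_ge :
  ((grid K * pr high + \sum_(k < K) grid k * pr (gcell k))%:E <=
   \int[P]_(w in A) tau_st w)%E.
Proof.
have [AE disj] := low_high_partition; have h0 := ltW h_gt0.
have mts : measurable_fun setT tau_st by exact: measurable_tau_star.
have mL := measurable_A_tau_preimage (emeasurable_itv `]-oo, (grid K)%:E]).
have mH := measurable_A_tau_preimage (emeasurable_itv `](grid K)%:E, +oo%E]).
rewrite [in X in (_ <= X)%E]AE ge0_integral_setU//; first last.
- by rewrite disj_set2E disj.
- by rewrite -AE => w /tau_star_gt0/ltW.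
- exact: measurable_funS mts.
rewrite EFinD addeC; apply: leeD; last first.
  rewrite EFinM -(prE P mH).
  apply: cst_le_integral => //; [exact: measurable_funS mts|by rewrite mulr_ge0|].
  by move=> w [[tk _]]; rewrite /= in_itv/= leey andbT (tau_star_taken tk) => /ltW.
have mcell k : measurable (gcell k) by exact: measurable_cell.
rewrite lowE -sumEFin.
under eq_bigr do rewrite EFinM -(prE P (mcell _)).
apply: (@sum_cst_le_integral _ _ _ P (fun k => gcell k) _ (fun k => grid k)).
- exact: mcell.
- exact: trivIset_gcell.
- by apply: measurable_funS mts => //; rewrite -lowE.
- by move=> k; rewrite mulr_ge0.
- by move=> k w [[tk _]]; rewrite /= in_itv/= (tau_star_taken tk) => /andP[/ltW].
Qed.

Lemma integral_opening_cost :
  (\int[P]_(w in A) (opening_cost c v alpha w + (v i)%:E) =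
   (\sum_j c j * pr (A `&` opened j) + v i * pr A)%:E)%E.
Proof.
have mA := measurable_A.
have mO j : measurable (opened j) by exact: measurable_opened.
have mcost j : measurable_fun setT (fun w => (c j * \1_(opened j) w)%:E).
  apply/measurable_EFinP/measurable_funM; first exact: measurable_cst.
  exact: measurable_indic.
have cost_ge0 j w : (0 <= (c j * \1_(opened j) w)%:E)%E.
  by rewrite lee_fin mulr_ge0 ?(ltW (c_gt0 j))// indicE.
under eq_integral do rewrite opening_costE.
rewrite ge0_integralD//; first last.
- by move=> w _; rewrite lee_fin.
- by apply: emeasurable_sum => j; exact: measurable_funS (mcost j).
- by move=> w _; exact: sume_ge0.
rewrite integral_cst// EFinD EFinM -(prE P mA); congr (_ + _)%E.
rewrite ge0_integral_sum//; last by move=> j; exact: measurable_funS (mcost j).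
rewrite -sumEFin; apply: eq_bigr => j _.
rewrite (eq_integral (fun w => (c j)%:E * (\1_(opened j) w)%:E)%E); last first.
  by move=> w _; rewrite EFinM.
rewrite ge0_integralZl//.
- by rewrite integral_indic// setIC EFinM -(prE P (measurableI _ _ mA (mO j))).
- apply: (measurable_funS measurableT) => //.
  by apply/measurable_EFinP; exact: measurable_indic.
- by rewrite lee_fin ltW.
Qed.

Lemma integral_tau_star_add :
  (\int[P]_(w in A) (tau_st w + (c i + v i)%:E) =
   \int[P]_(w in A) tau_st w + ((c i + v i) * pr A)%:E)%E.
Proof.
have mA := measurable_A.
have mts : measurable_fun A tau_st.
  by apply: (measurable_funS measurableT) => //; exact: measurable_tau_star.
have beta_ge0 : (0 <= (c i + v i)%:E)%E by rewrite lee_fin addr_ge0 ?(ltW (c_gt0 i)).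
rewrite (ge0_integralD P mA (fun w Aw => ltW (tau_star_gt0 Aw)) mts) //.
by rewrite integral_cst// EFinM -(prE P mA).
Qed.

Lemma opening_cost_le_grid : \sum_j c j <= grid K ->
  (\int[P]_(w in A) (opening_cost c v alpha w + (v i)%:E) <=
   \int[P]_(w in A) (tau_st w + (c i + v i)%:E) + (n%:R * h)%:E)%E.
Proof.
move=> CK; rewrite integral_opening_cost integral_tau_star_add.
apply: le_trans (leeD2r _ (leeD2r _ integral_tau_star_ge)).
rewrite -!EFinD lee_fin; have := sum_pr_opened CK; lra.
Qed.

End balanced_stopping_cost.

Unset Implicit Arguments.

Theorem lemma4p6 (R : realType) (n : nat) (c v : 'I_n -> R) (X : 'I_n -> R -> R)
  (d : measure_display) (T : measurableType d) (P : probability T R)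
  (alpha : 'I_n -> T -> \bar R) :
  (forall i, 0 < c i) -> (forall i, 0 <= v i) ->
  feasible_GCP c X ->
  (forall i, measurable_fun setT (alpha i)) ->
  mutually_independent P alpha ->
  (forall i (s : R), 0 <= s ->
     P [set w | (s%:E < alpha i w)%E] = (expR (- cum_rate (X i) (c i) s))%:E) ->
  (forall i, P [set w | (alpha i w < 0)%E] = 0%E) ->
  forall (i : 'I_n) (B : set (\bar R)), measurable (B : set (\bar R)) ->
    let A := [set w | taken c v alpha i w /\ B (tau_star c v alpha w)] in
    (\int[P]_(w in A) (opening_cost c v alpha w + (v i)%:E)
      <= \int[P]_(w in A) (tau_star c v alpha w + (c i + v i)%:E))%E.
Proof.
move=> c_gt0 v_ge0 feasX malpha indep survival _ i B mB /=.
apply/lee_addgt0Pr => e e_gt0.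
have n_gt0 : 0 < n%:R :> R by rewrite ltr0n (leq_ltn_trans _ (ltn_ord i)).
pose h := e / n%:R; have h_gt0 : 0 < h by rewrite divr_gt0.
pose K := (Num.truncn ((\sum_j c j) / h)).+1.
have CK : \sum_j c j <= K%:R * h by rewrite -ler_pdivrMr// ltW// truncnS_gt.
have := opening_cost_le_grid c_gt0 feasX malpha indep survival i mB v_ge0 h_gt0 CK.
by rewrite /h mulrC divfK// gt_eqF.
Qed.
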